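(* Let $n,m\in\mathbb N$, $d:=\min\{n,m\}$, fix an integer $k\in\{1,\dots,d-1\}$ and $\theta\in(0,1)$, and set $\alpha:=k+\theta$. Then $\mathsf P_\alpha$ is not stable under completely positive post-composition: there exist a Hermitian-preserving map $\Phi:\mathbb M_n\to\mathbb M_m$ with $\Phi\in\mathsf P_\alpha$ and a completely positive map $\Gamma:\mathbb M_m\to\mathbb M_m$ such that $\Gamma\circ\Phi\notin\mathsf P_\alpha$. More precisely, if $\Phi\in\mathsf P_\alpha\setminus\mathsf P_{k+1}$, then there exists $A\in\mathbb M_m$ such that $\mathrm{Ad}_A\circ\Phi\notin\mathsf P_\alpha$, where $\mathrm{Ad}_A(Y)=AYA^\ast$.
   Context: The Choi matrix of a linear $\Phi:\mathbb M_n\to\mathbb M_m$ is $C_\Phi=\sum_{i,j=1}^nE_{ij}\otimes\Phi(E_{ij})$, with $E_{ij}$ the matrix units of $\mathbb M_n$. For $\psi=\sum_{i,j}a_{ij}e_i\otimes f_j\in\mathbb C^n\otimes\mathbb C^m$ (standard bases), its Schmidt coefficients $s_1(\psi)\ge\dots\ge s_d(\psi)\ge0$ are the singular values of $[a_{ij}]$. For $\beta\in[1,d]$ with $k'=\lfloor\beta\rfloor$, $\theta'=\beta-k'$, $r'=\lceil\beta\rceil$, a unit vector $\psi$ is $\beta$-admissible if $s_j(\psi)=0$ for $j\ge r'+1$ and, when $\theta'>0$, $s_{k'+1}(\psi)\le\frac{\theta'}{k'}\sum_{j=1}^{k'}s_j(\psi)$; $\mathcal V_\beta$ is the set of these. A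 Hermitian-preserving map $\Phi$ belongs to $\mathsf P_\beta$ ($\beta$-positive) if $\langle\psi,C_\Phi\psi\rangle\ge0$ for all $\psi\in\mathcal V_\beta$. (For integer $\beta$ this is $\beta$-positivity in the usual sense.) *)

From HB Require Import structures.
From mathcomp Require Import all_boot all_order all_algebra.
From mathcomp Require Import algC.
Set Implicit Arguments. Unset Strict Implicit. Unset Printing Implicit Defensive.
Import Order.TTheory GRing.Theory Num.Theory Num.Def.
Local Open Scope ring_scope.

Definition adjmx {p q : nat} (M : 'M[algC]_(p, q)) : 'M[algC]_(q, p) :=
  (map_mx conjC M)^T.

(* inverse of mxvec_index : 'I_(p*q) -> 'I_p * 'I_q;
   index mxvec_index i j  <->  basis vector e_i (x) f_j *)
Definition tens_pair {p q : nat} (k : 'I_(p * q)) : 'I_p * 'I_q :=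
  enum_val (cast_ord (esym (mxvec_cast p q)) k).

Definition matunit {n : nat} (i j : 'I_n) : 'M[algC]_n := delta_mx i j.

(* Choi matrix C_Phi = sum_{i,j} E_ij (x) Phi(E_ij); its entry at
   (e_i (x) f_a , e_j (x) f_b) is Phi(E_ij)_{ab}. *)
Definition choi {n m : nat} (Phi : 'M[algC]_n -> 'M[algC]_m) : 'M[algC]_(n * m) :=
  \matrix_(p, q) Phi (matunit (tens_pair p).1 (tens_pair q).1)
                      (tens_pair p).2 (tens_pair q).2.

Definition qform {N : nat} (X : 'M[algC]_N) (psi : 'rV[algC]_N) : algC :=
  (map_mx conjC psi *m X *m psi^T) 0 0.

Definition unit_vector {N : nat} (psi : 'rV[algC]_N) : Prop :=
  (psi *m adjmx psi) 0 0 = 1.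

Definition singular_values {p q : nat} (M : 'M[algC]_(p, q)) (s : seq algC) : Prop :=
  [/\ size s = minn p q, all (fun x => 0 <= x) s, sorted (fun x y => y <= x) s &
   exists (U : 'M[algC]_p) (V : 'M[algC]_q),
     [/\ U *m adjmx U = 1%:M, V *m adjmx V = 1%:M &
       M = U *m (\matrix_(i, j) (if (i : nat) == j then s`_i else 0)) *m adjmx V]].

(* Schmidt coefficients of psi in C^n (x) C^m: singular values of the
   coefficient matrix [a_ij], a_ij = coefficient of e_i (x) f_j. *)
Definition schmidt_coeffs {n m : nat} (psi : 'rV[algC]_(n * m)) (s : seq algC) : Prop :=
  singular_values (vec_mx psi) s.

(* beta-admissible unit vectors (s`_j is s_{j+1} of the paper) *)
Definition admissible {n m : nat} (beta : algC) (psi : 'rV[algC]_(n * m)) : Prop :=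
  let k' := Num.truncn beta in
  let theta' := beta - k'%:R in
  let r' := `|Num.ceil beta|%N in
  unit_vector psi /\
  exists s, [/\ schmidt_coeffs psi s,
     (forall j, (r' <= j)%N -> s`_j = 0) &
     (0 < theta' -> s`_k' <= theta' / k'%:R * \sum_(j < k') s`_j)].

Definition herm_preserving {n m : nat} (Phi : 'M[algC]_n -> 'M[algC]_m) : Prop :=
  forall X, Phi (adjmx X) = adjmx (Phi X).

Definition Pbeta {n m : nat} (beta : algC) (Phi : 'M[algC]_n -> 'M[algC]_m) : Prop :=
  herm_preserving Phi /\
  forall psi : 'rV[algC]_(n * m), admissible beta psi -> 0 <= qform (choi Phi) psi.

Definition psd {N : nat} (X : 'M[algC]_N) : Prop := forall v, 0 <= qform X v.

(* id_k (x) Gamma acting on 'M_(k*m) = M_k (x) M_m *)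
Definition ampliate {m m' : nat} (k : nat) (Gamma : 'M[algC]_m -> 'M[algC]_m')
  (X : 'M[algC]_(k * m)) : 'M[algC]_(k * m') :=
  \matrix_(p, q)
    Gamma (\matrix_(a, b) X (mxvec_index (tens_pair p).1 a)
                            (mxvec_index (tens_pair q).1 b))
          (tens_pair p).2 (tens_pair q).2.

Definition completely_positive {m m' : nat} (Gamma : 'M[algC]_m -> 'M[algC]_m') : Prop :=
  forall (k : nat) (X : 'M[algC]_(k * m)), psd X -> psd (ampliate Gamma X).

Definition Ad {m : nat} (A : 'M[algC]_m) (Y : 'M[algC]_m) : 'M[algC]_m :=
  A *m Y *m adjmx A.

From HB Require Import structures.
From mathcomp Require Import all_boot all_order all_algebra.
From mathcomp Require Import algC ring zify.
From Stdlib Require Import Classical.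
Import Order.TTheory GRing.Theory Num.Theory Num.Def.
Set Implicit Arguments. Unset Strict Implicit. Unset Printing Implicit Defensive.
Local Open Scope ring_scope.

(* Write M_psi for the coefficient matrix of psi, so that s(psi) are its singular values.
   The witness is Phi_t(X) = tr(X) 1 - t R X R^T with R the partial identity of rank k+1.
   Its Choi form is <psi, C psi> = |psi|^2 - t |tr(R M_psi)|^2, and a Schur test on the
   entries of V^* R U gives |tr(R M_psi)| <= sum_j s_j(psi). For an alpha-admissible unit
   psi the constraint k s_(k+1) <= theta sum_(j<=k) s_j forces
   (sum_j s_j)^2 <= (k+theta)^2 / (k+theta^2), so Phi_t is in P_alpha for
   t = (k+theta^2)/(k+theta)^2; the maximally entangled vector of Schmidt rank k+1 gives
   1 - t (k+1) < 0, so Phi_t is not in P_(k+1).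
   Conversely, let psi = U diag(s) V^* be (k+1)-admissible with negative Choi form for
   Phi. The alpha-admissible psi' = U diag(c,...,c,theta c) is positive wherever s is,
   so M_psi = M_psi' B with B = diag(s/(c,...,c,theta c)) V^*. Since the Choi form of
   Ad_A o Phi at psi' is the Choi form of Phi at M_psi' conj(A), taking A = conj(B)
   shows that Ad_A o Phi, with Ad_A completely positive, is not in P_alpha. *)

Lemma tens_pairK p q (u : 'I_(p * q)) :
  mxvec_index (tens_pair u).1 (tens_pair u).2 = u.
Proof. by rewrite /tens_pair /mxvec_index -surjective_pairing enum_valK cast_ordKV. Qed.

Lemma mxvec_indexK p q (i : 'I_p) (a : 'I_q) : tens_pair (mxvec_index i a) = (i, a).
Proof. by rewrite /tens_pair /mxvec_index cast_ordK enum_rankK. Qed.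

Lemma eq_mxvec_index p q (i j : 'I_p) (a b : 'I_q) :
  (mxvec_index i a == mxvec_index j b) = (i == j) && (a == b).
Proof.
apply/eqP/andP => [/(congr1 tens_pair) | [/eqP-> /eqP->] //].
by rewrite !mxvec_indexK => -[-> ->].
Qed.

Lemma big_tens_pair (V : nmodType) p q (F : 'I_p -> 'I_q -> V) :
  \sum_(u < p * q) F (tens_pair u).1 (tens_pair u).2 = \sum_i \sum_a F i a.
Proof.
rewrite pair_big /= (reindex (fun u : 'I_p * 'I_q => mxvec_index u.1 u.2)) /=.
  by apply: eq_bigr => u _; rewrite mxvec_indexK.
by exists (@tens_pair p q) => u _; rewrite ?mxvec_indexK -?surjective_pairing ?tens_pairK.
Qed.

Lemma vec_mx_tens_pair p q (psi : 'rV[algC]_(p * q)) u :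
  psi 0 u = vec_mx psi (tens_pair u).1 (tens_pair u).2.
Proof. by rewrite mxE tens_pairK. Qed.

Lemma adjmxM p q r (A : 'M[algC]_(p, q)) (B : 'M[algC]_(q, r)) :
  adjmx (A *m B) = adjmx B *m adjmx A.
Proof. by rewrite /adjmx map_mxM trmx_mul. Qed.

Lemma adjmxK p q (A : 'M[algC]_(p, q)) : adjmx (adjmx A) = A.
Proof. by apply/matrixP => i j; rewrite !mxE conjCK. Qed.

Lemma adjmx1 p : adjmx (1%:M : 'M[algC]_p) = 1%:M.
Proof. by rewrite /adjmx map_mx1 trmx1. Qed.

Lemma map_conjCK p q (A : 'M[algC]_(p, q)) : map_mx conjC (map_mx conjC A) = A.
Proof. by apply/matrixP => i j; rewrite !mxE conjCK. Qed.

Lemma sesqformE p (x y : 'rV[algC]_p) (X : 'M[algC]_p) :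
  (map_mx conjC x *m X *m y^T) 0 0 = \sum_a \sum_b (x 0 a)^* * X a b * y 0 b.
Proof.
rewrite mxE exchange_big; apply: eq_bigr => a _.
by rewrite !mxE big_distrl; apply: eq_bigr => b _; rewrite !mxE.
Qed.

(** * Block matrices over M_p (x) M_q *)

(* sum_(i,j) E_ij (x) G i j; [choi] and [ampliate] are of this form by definition. *)
Definition tensor_mx p q (G : 'I_p -> 'I_p -> 'M[algC]_q) : 'M[algC]_(p * q) :=
  \matrix_(u, v) G (tens_pair u).1 (tens_pair v).1 (tens_pair u).2 (tens_pair v).2.

Lemma qform_tensor_mx p q (G : 'I_p -> 'I_p -> 'M[algC]_q) psi :
  let M := vec_mx psi in
  qform (tensor_mx G) psi =
  \sum_i \sum_j (map_mx conjC (row i M) *m G i j *m (row j M)^T) 0 0.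
Proof.
move=> M; rewrite /qform sesqformE.
under eq_bigr do under eq_bigr do rewrite !mxE !vec_mx_tens_pair.
rewrite (big_tens_pair (fun i a => \sum_v (M i a)^* * G i (tens_pair v).1 a (tens_pair v).2
                                    * M (tens_pair v).1 (tens_pair v).2)).
under eq_bigr do under eq_bigr do
  rewrite (big_tens_pair (fun j b => (M _ _)^* * G _ j _ b * M j b)).
under eq_bigr do rewrite exchange_big.
apply: eq_bigr => i _; apply: eq_bigr => j _.
by rewrite sesqformE; apply: eq_bigr => a _; apply: eq_bigr => b _; rewrite !mxE.
Qed.

Lemma qform_tensor_mx_Ad p q (G : 'I_p -> 'I_p -> 'M[algC]_q) (A : 'M[algC]_q) psi :
  qform (tensor_mx (fun i j => Ad A (G i j))) psi =
  qform (tensor_mx G) (mxvec (vec_mx psi *m map_mx conjC A)).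
Proof.
rewrite !qform_tensor_mx mxvecK; apply: eq_bigr => i _; apply: eq_bigr => j _.
by rewrite /Ad !row_mul map_mxM map_conjCK trmx_mul !mulmxA.
Qed.

Lemma tensor_mx_blocks p q (X : 'M[algC]_(p * q)) :
  tensor_mx (fun i j => \matrix_(a, b) X (mxvec_index i a) (mxvec_index j b)) = X.
Proof. by apply/matrixP => u v; rewrite !mxE !tens_pairK. Qed.

Lemma Ad_completely_positive m (A : 'M[algC]_m) : completely_positive (Ad A).
Proof.
move=> k X psdX psi.
have -> : ampliate (Ad A) X =
    tensor_mx (fun i j => Ad A (\matrix_(a, b) X (mxvec_index i a) (mxvec_index j b))).
  by [].
by rewrite qform_tensor_mx_Ad tensor_mx_blocks.
Qed.

Lemma Ad_is_linear m (A : 'M[algC]_m) : linear (Ad A).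
Proof. by move=> a X Y; rewrite /Ad mulmxDr mulmxDl -scalemxAr -scalemxAl. Qed.

HB.instance Definition _ m (A : 'M[algC]_m) :=
  GRing.isLinear.Build algC _ _ _ (@Ad m A) (@Ad_is_linear m A).

(** * Schmidt coefficients *)

Lemma nth_ge0 (R : numDomainType) (s : seq R) j : all (fun x => 0 <= x) s -> 0 <= s`_j.
Proof.
move=> /(all_nthP 0) s_ge0; case: (ltnP j (size s)) => [/s_ge0 // | j_ge].
by rewrite nth_default.
Qed.

Definition rdiag_mx p q (s : seq algC) : 'M[algC]_(p, q) :=
  \matrix_(i, j) (if (i : nat) == j then s`_i else 0).

Lemma sum_rdiag (V : nmodType) p q (g : nat -> V) :
  \sum_(i < p) \sum_(j < q) (if (i : nat) == j then g i else 0) = \sum_(j < minn p q) g j.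
Proof.
transitivity (\sum_(i < p | (i < q)%N) g i).
  rewrite [RHS]big_mkcond; apply: eq_bigr => i _.
  rewrite (eq_bigr (fun j : 'I_q => if (j : nat) == i then g j else 0)); last first.
    by move=> j _; rewrite eq_sym; case: eqP => // ->.
  by rewrite -big_mkcond big_ord1_eq.
rewrite (big_ord_widen p g (geq_minl p q)); apply: eq_bigl => i.
by rewrite leq_min ltn_ord.
Qed.

Lemma sumr_ord_supp (V : nmodType) (N k : nat) (g : nat -> V) :
  (k < N)%N -> (forall j, (k < j)%N -> g j = 0) -> \sum_(j < N) g j = \sum_(j < k.+1) g j.
Proof.
move=> kN g0; rewrite (big_ord_widen N g kN) [RHS]big_mkcond; apply: eq_bigr => j _.
by case: ltnP => // /g0.
Qed.

Lemma unitary_col_norm p (U : 'M[algC]_p) r :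
  adjmx U *m U = 1%:M -> \sum_i `|U i r| ^+ 2 = 1.
Proof.
move/(congr1 (fun M : 'M_p => M r r)); rewrite !mxE eqxx mulr1n => <-.
by apply: eq_bigr => i _; rewrite !mxE normCKC.
Qed.

Section SchurTest.

Variables (p q : nat) (R : 'M[algC]_(q, p)).
Hypothesis R_rows : forall a, \sum_i `|R a i| <= 1.
Hypothesis R_cols : forall i, \sum_a `|R a i| <= 1.

Lemma unitary_compress_entry_le1 (U : 'M[algC]_p) (V : 'M[algC]_q) l r :
  adjmx U *m U = 1%:M -> adjmx V *m V = 1%:M -> `|(adjmx V *m R *m U) l r| <= 1.
Proof.
(* |V a l| |U i r| <= (|V a l|^2 + |U i r|^2) / 2, and columns of unitaries are unit vectors. *)
move=> uU uV.
have amgm (x y : algC) : 0 <= x -> 0 <= y -> x * y <= (x ^+ 2 + y ^+ 2) / 2.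
  by move=> x0 y0; exact: (real_leif_mean_square (ger0_real x0) (ger0_real y0)).1.
set SV := \sum_i \sum_a `|R a i| * `|V a l| ^+ 2.
set SU := \sum_i \sum_a `|R a i| * `|U i r| ^+ 2.
have SV_le1 : SV <= 1.
  rewrite /SV exchange_big -(unitary_col_norm l uV); apply: ler_sum => a _.
  by rewrite -mulr_suml ler_piMl ?exprn_ge0 ?R_rows.
have SU_le1 : SU <= 1.
  rewrite /SU -(unitary_col_norm r uU); apply: ler_sum => i _.
  by rewrite -mulr_suml ler_piMl ?exprn_ge0 ?R_cols.
apply: (@le_trans _ _ ((SV + SU) / 2)); last first.
  by rewrite ler_pdivrMr // mul1r; apply: lerD.
rewrite /SV /SU -big_split mulr_suml mxE; apply: le_trans (ler_norm_sum _ _ _) _.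
apply: ler_sum => i _; rewrite -big_split mulr_suml mxE big_distrl /=.
apply: le_trans (ler_norm_sum _ _ _) _; apply: ler_sum => a _.
rewrite !mxE !normrM norm_conjC [leLHS]mulrAC [leLHS]mulrC -mulrDr -mulrA.
by apply: ler_wpM2l; [exact: normr_ge0 | exact: amgm].
Qed.

Lemma trace_svd_le (U : 'M[algC]_p) (V : 'M[algC]_q) s :
  U *m adjmx U = 1%:M -> V *m adjmx V = 1%:M -> all (fun x => 0 <= x) s ->
  `|\tr (R *m (U *m rdiag_mx p q s *m adjmx V))| <= \sum_(j < minn p q) s`_j.
Proof.
move=> /mulmx1C uU /mulmx1C uV s_ge0.
rewrite mulmxA mxtrace_mulC !mulmxA -sum_rdiag /mxtrace exchange_big /=.
apply: le_trans (ler_norm_sum _ _ _) _; apply: ler_sum => l _.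
rewrite mxE; apply: le_trans (ler_norm_sum _ _ _) _; apply: ler_sum => i _.
have D_ge0 : 0 <= rdiag_mx p q s i l by rewrite mxE; case: ifP => // _; exact: nth_ge0.
rewrite normrM (ger0_norm D_ge0) [leRHS](_ : _ = rdiag_mx p q s i l); last by rewrite mxE.
by apply: ler_piMl => //; exact: unitary_compress_entry_le1.
Qed.

End SchurTest.

Lemma sum_norm_pid_mx_row p q r (a : 'I_q) :
  \sum_(i < p) `|(pid_mx r : 'M[algC]_(q, p)) a i| <= 1.
Proof.
rewrite (eq_bigr (fun i : 'I_p => if (i : nat) == a then ((a < r)%N)%:R else 0)).
  rewrite -big_mkcond (big_ord1_eq _ (fun=> ((a < r)%N)%:R)).
  by case: ifP; rewrite ?lern1 ?leq_b1.
by move=> i _; rewrite mxE normr_nat eq_sym; case: eqP.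
Qed.

Lemma sum_norm_pid_mx_col p q r (i : 'I_p) :
  \sum_(a < q) `|(pid_mx r : 'M[algC]_(q, p)) a i| <= 1.
Proof.
under eq_bigr do rewrite -[pid_mx r]tr_pid_mx mxE.
exact: sum_norm_pid_mx_row.
Qed.

Lemma vec_mx_norm2 p q (psi : 'rV[algC]_(p * q)) :
  (psi *m adjmx psi) 0 0 = \tr (vec_mx psi *m adjmx (vec_mx psi)).
Proof.
rewrite mxE /mxtrace.
under eq_bigr do rewrite !mxE vec_mx_tens_pair.
rewrite (big_tens_pair (fun i a => vec_mx psi i a * (vec_mx psi i a)^*)).
by apply: eq_bigr => i _; rewrite mxE; apply: eq_bigr => a _; rewrite !mxE.
Qed.

Lemma svd_norm2 p q (U : 'M[algC]_p) (V : 'M[algC]_q) s :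
  U *m adjmx U = 1%:M -> V *m adjmx V = 1%:M -> all (fun x => 0 <= x) s ->
  let M := U *m rdiag_mx p q s *m adjmx V in
  \tr (M *m adjmx M) = \sum_(j < minn p q) s`_j ^+ 2.
Proof.
move=> /mulmx1C uU /mulmx1C uV s_ge0 M.
rewrite /M !adjmxM adjmxK !mulmxA -(mulmxA (U *m _)) uV mulmx1.
rewrite mxtrace_mulC !mulmxA uU mul1mx -(sum_rdiag p q (fun j => s`_j ^+ 2)) /mxtrace.
apply: eq_bigr => i _; rewrite mxE; apply: eq_bigr => j _; rewrite !mxE.
by case: eqP => _; rewrite ?mul0r // geC0_conj ?nth_ge0 // expr2.
Qed.

Lemma schmidt_norm2 p q (psi : 'rV[algC]_(p * q)) s :
  schmidt_coeffs psi s -> (psi *m adjmx psi) 0 0 = \sum_(j < minn p q) s`_j ^+ 2.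
Proof.
by case=> _ s_ge0 _ [U [V [uU uV svd]]]; rewrite vec_mx_norm2 svd; exact: svd_norm2.
Qed.

Lemma schmidt_trace_pid_le p q r (psi : 'rV[algC]_(p * q)) s :
  schmidt_coeffs psi s ->
  `|\tr ((pid_mx r : 'M_(q, p)) *m vec_mx psi)| <= \sum_(j < minn p q) s`_j.
Proof.
case=> _ s_ge0 _ [U [V [uU uV ->]]].
exact: (trace_svd_le (@sum_norm_pid_mx_row p q r) (@sum_norm_pid_mx_col p q r)).
Qed.

(** * The admissibility inequality *)

Section ScalarBounds.

Variable R : numFieldType.

Lemma sqr_sum_le (k : nat) (a : nat -> R) : (forall j, a j \is Num.real) ->
  (\sum_(j < k) a j) ^+ 2 <= k%:R * \sum_(j < k) a j ^+ 2.
Proof.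
move=> a_real; elim: k => [|k IH]; first by rewrite !big_ord0 expr0n mul0r.
rewrite !big_ord_recr /=.
set S := \sum_(j < k) a j; set Q := \sum_(j < k) a j ^+ 2; set x := a k.
have cross : S * x *+ 2 <= Q + k%:R * x ^+ 2.
  rewrite mulr_suml -sumrMnl -[k in k%:R]card_ord mulr_natl -sumr_const -big_split /=.
  by apply: ler_sum => j _; exact: (real_leif_mean_square_scaled (a_real j) (a_real k)).1.
have -> : k.+1%:R * (Q + x ^+ 2) = k%:R * Q + (Q + k%:R * x ^+ 2) + x ^+ 2.
  by rewrite -natr1; ring.
by rewrite sqrrD lerD2r; apply: lerD.
Qed.

Lemma admissible_profile_ineq (K th S x : R) :
  1 <= K -> 0 < th -> th <= 1 -> 0 <= x -> K * x <= th * S ->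
  K * (K + th ^+ 2) * (S + x) ^+ 2 <= (K + th) ^+ 2 * (S ^+ 2 + K * x ^+ 2).
Proof.
move=> K_ge1 th_gt0 th_le1 x_ge0 adm.
have K_gt0 : 0 < K := lt_le_trans ltr01 K_ge1.
have gap_ge0 : 0 <= th * S - K * x by rewrite subr_ge0.
have S_ge0 : 0 <= S.
  by rewrite -(pmulr_rge0 _ th_gt0); apply: le_trans adm; rewrite mulr_ge0 // ltW.
set al := 2 * K * th + th ^+ 2 - K * th ^+ 2.
set be := th * K * (K - 1 + 2 * th).
have second_ge0 : 0 <= al * S - be * x.
  have -> : al * S - be * x =
      2 * th * (K + th) * (1 - th) * S + th * (K - 1 + 2 * th) * (th * S - K * x).
    by rewrite /al /be; ring.
  have th_ge0 := ltW th_gt0; have K_ge0 := ltW K_gt0.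
  have K1th_ge0 : 0 <= K - 1 + 2 * th by rewrite addr_ge0 ?subr_ge0 ?mulr_ge0.
  have first_ge0 : 0 <= 2 * th * (K + th) * (1 - th).
    by rewrite mulr_ge0 ?subr_ge0 // mulr_ge0 ?addr_ge0 // mulr_ge0.
  by rewrite addr_ge0 // mulr_ge0 // mulr_ge0.
(* th * (RHS - LHS) factors, the first factor being the admissibility slack. *)
rewrite -subr_ge0 -(pmulr_rge0 _ th_gt0).
have -> : th * ((K + th) ^+ 2 * (S ^+ 2 + K * x ^+ 2) - K * (K + th ^+ 2) * (S + x) ^+ 2) =
    (th * S - K * x) * (al * S - be * x) by rewrite /al /be; ring.
exact: mulr_ge0.
Qed.

Lemma admissible_sqr_sum_le (k : nat) (th : R) (s : nat -> R) :
  (1 <= k)%N -> 0 < th -> th <= 1 -> (forall j, 0 <= s j) ->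
  k%:R * s k <= th * \sum_(j < k) s j ->
  (k%:R + th ^+ 2) * (\sum_(j < k.+1) s j) ^+ 2 <=
  (k%:R + th) ^+ 2 * \sum_(j < k.+1) s j ^+ 2.
Proof.
move=> k_ge1 th_gt0 th_le1 s_ge0 adm; rewrite !big_ord_recr /=.
set S := \sum_(j < k) s j; set Q := \sum_(j < k) s j ^+ 2; set x := s k.
have K_gt0 : 0 < k%:R :> R by rewrite ltr0n.
have CS : S ^+ 2 <= k%:R * Q by apply: sqr_sum_le => j; exact: ger0_real.
rewrite -(ler_pM2l K_gt0) mulrA.
apply: le_trans (admissible_profile_ineq _ th_gt0 th_le1 (s_ge0 k) adm) _.
  by rewrite ler1n.
rewrite [leRHS]mulrCA; apply: ler_wpM2l; first by rewrite exprn_ge0 // addr_ge0 // ltW.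
by rewrite mulrDr lerD2r.
Qed.

End ScalarBounds.

Lemma truncn_natD k (th : algC) : 0 <= th -> th < 1 -> truncn (k%:R + th) = k.
Proof. by move=> th_ge0 th_lt1; apply: truncn_def; rewrite lerDl th_ge0 -natr1 ltrD2l. Qed.

Lemma ceil_natD k (th : algC) : 0 < th -> th <= 1 -> `|ceil (k%:R + th)|%N = k.+1.
Proof.
move=> th_gt0 th_le1; rewrite (@ceil_def _ _ k.+1) //.
by rewrite -addn1 PoszD addrK -!pmulrn ltrDl th_gt0 natrD lerD2l.
Qed.

Lemma admissible_natDE n m k (th : algC) (psi : 'rV[algC]_(n * m)) :
  (1 <= k)%N -> 0 < th -> th <= 1 ->
  admissible (k%:R + th) psi <->
  unit_vector psi /\
  exists s, [/\ schmidt_coeffs psi s, forall j, (k < j)%N -> s`_j = 0 &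
                th < 1 -> k%:R * s`_k <= th * \sum_(j < k) s`_j].
Proof.
move=> k_ge1 th_gt0 th_le1; rewrite /admissible ceil_natD //.
move: th_le1; rewrite le_eqVlt => /orP[/eqP th1 | th_lt1].
- rewrite th1 natr1 natrK subrr !ltxx.
  by split=> -[u [s [svd supp _]]]; split=> //; exists s; split.
- rewrite truncn_natD ?ltW // addrAC subrr add0r.
  have scaled (s : seq algC) :
      (s`_k <= th / k%:R * \sum_(j < k) s`_j) = (k%:R * s`_k <= th * \sum_(j < k) s`_j).
    by rewrite mulrAC ler_pdivlMr ?ltr0n // mulrC.
  split=> -[u [s [svd supp adm]]]; split=> //; exists s; split=> // _.
    by rewrite -scaled; exact: adm.
  by rewrite scaled; exact: adm.
Qed.

(** * The witness map *)

Lemma qform_adjmx_mul_rank1 p (w psi : 'rV[algC]_p) :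
  qform (adjmx w *m w) psi = `|(w *m psi^T) 0 0| ^+ 2.
Proof.
rewrite normCKC /qform mulmxA -(mulmxA (map_mx conjC psi *m adjmx w)) mxE big_ord1.
congr (_ * _).
rewrite !mxE rmorph_sum; apply: eq_bigr => u _.
by rewrite !mxE rmorphM mulrC.
Qed.

Lemma mul_delta_mx_entry (R : pzSemiRingType) p q r (A : 'M[R]_(p, q)) (B : 'M[R]_(q, r))
    i j a b :
  (A *m delta_mx i j *m B) a b = A a i * B j b.
Proof.
rewrite -[delta_mx i j](mul_delta_mx (0 : 'I_1)) mulmxA -colE -mulmxA -rowE.
by rewrite mxE big_ord1 !mxE.
Qed.

Lemma mxtrace_delta (R : pzSemiRingType) p (i j : 'I_p) :
  \tr (delta_mx i j : 'M[R]_p) = (i == j)%:R.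
Proof.
rewrite /mxtrace (bigD1 i) //= big1 ?addr0; first by rewrite mxE eqxx.
by move=> l /negbTE il; rewrite mxE il.
Qed.

Definition witness_map (n m k : nat) (t : algC) : 'M[algC]_n -> 'M[algC]_m :=
  fun X => \tr X *: 1%:M - t *: (pid_mx k.+1 *m X *m pid_mx k.+1).
Arguments witness_map : clear implicits.

Lemma witness_map_is_linear n m k t : linear (witness_map n m k t).
Proof.
move=> a X Y; rewrite /witness_map mxtraceD mxtraceZ mulmxDr mulmxDl -scalemxAr -scalemxAl.
by apply/matrixP => u v; rewrite !mxE; ring.
Qed.

HB.instance Definition _ (n m k : nat) (t : algC) :=
  GRing.isLinear.Build algC _ _ _ (witness_map n m k t) (@witness_map_is_linear n m k t).

Section WitnessMap.

Variables n m k : nat.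

Let omega : 'rV[algC]_(n * m) := mxvec (pid_mx k.+1).

Lemma witness_map_herm t : t \is Num.real -> herm_preserving (witness_map n m k t).
Proof.
move=> t_real X; rewrite /witness_map /adjmx map_mxB !map_mxZ map_mx1 !map_mxM !map_pid_mx.
rewrite /= (conj_Creal t_real) linearB /= !linearZ /= trmx1 !trmx_mul !tr_pid_mx mulmxA.
by rewrite mxtrace_tr trace_map_mx.
Qed.

Lemma choi_witness_map t : choi (witness_map n m k t) = 1%:M - t *: (adjmx omega *m omega).
Proof.
apply/matrixP => u v; case/mxvec_indexP: u => i a; case/mxvec_indexP: v => j b.
rewrite mxE !mxvec_indexK /= /witness_map /matunit mxtrace_delta.
rewrite 5![in LHS]mxE mul_delta_mx_entry 4![in RHS]mxE eq_mxvec_index -natrM mulnb.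
congr (_ - _ * _); rewrite [RHS]mxE big_ord1 !mxE !mxvecE !mxE conjC_nat.
by congr (_ * _); rewrite eq_sym; case: eqP => // ->.
Qed.

Lemma qform_choi_witness_map t (psi : 'rV[algC]_(n * m)) :
  qform (choi (witness_map n m k t)) psi =
  (psi *m adjmx psi) 0 0 - t * `|\tr (pid_mx k.+1 *m vec_mx psi)| ^+ 2.
Proof.
have omega_psi : (omega *m psi^T) 0 0 = \tr (pid_mx k.+1 *m vec_mx psi).
  rewrite mxE; under eq_bigr do rewrite !mxE !vec_mx_tens_pair mxvecK.
  rewrite (big_tens_pair (fun i a => pid_mx k.+1 i a * vec_mx psi i a)) /mxtrace exchange_big.
  apply: eq_bigr => a _; rewrite mxE; apply: eq_bigr => i _.
  by rewrite -[in RHS]tr_pid_mx [in RHS]mxE.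
rewrite choi_witness_map -omega_psi -qform_adjmx_mul_rank1 /qform.
rewrite mulmxBr mulmxBl mulmx1 -scalemxAr -scalemxAl mxE [X in _ + X]mxE mxE; congr (_ - _).
  by rewrite mxE; apply: eq_bigr => u _; rewrite !mxE mulrC.
by rewrite mxE.
Qed.

End WitnessMap.

(** * Extremal Schmidt profiles *)

(* For [th = 1] this is the maximally entangled profile of Schmidt rank k+1. *)
Definition schmidt_profile (N k : nat) (th : algC) : seq algC :=
  let c := (sqrtC (k%:R + th ^+ 2))^-1 in
  mkseq (fun j => if (j < k)%N then c else if j == k then th * c else 0) N.

Section SchmidtProfile.

Variables (N k : nat) (th : algC).
Hypotheses (kN : (k < N)%N) (th_gt0 : 0 < th) (th_le1 : th <= 1).

Let c := (sqrtC (k%:R + th ^+ 2))^-1.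
Let s := schmidt_profile N k th.

Let norm_gt0 : 0 < k%:R + th ^+ 2.
Proof. by rewrite ltr_wpDl ?ler0n ?exprn_gt0. Qed.

Let c_gt0 : 0 < c.
Proof. by rewrite invr_gt0 sqrtC_gt0 norm_gt0. Qed.

Let c_sqr : c ^+ 2 = (k%:R + th ^+ 2)^-1.
Proof. by rewrite exprVn sqrtCK. Qed.

Lemma schmidt_profile_nth j : s`_j = if (j < k)%N then c else if j == k then th * c else 0.
Proof.
rewrite /s /schmidt_profile; case: (ltnP j N) => [jN | Nj]; first by rewrite nth_mkseq.
by rewrite nth_default ?size_mkseq // ltnNge gtn_eqF ?(leq_trans (ltnW kN)) ?(leq_trans kN).
Qed.

Lemma schmidt_profile_eq0 j : (k < j)%N -> s`_j = 0.
Proof. by move=> kj; rewrite schmidt_profile_nth ltnNge ltnW // gtn_eqF. Qed.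

Lemma schmidt_profile_gt0 j : (j <= k)%N -> 0 < s`_j.
Proof.
rewrite leq_eqVlt schmidt_profile_nth => /orP[/eqP-> | ->]; last exact: c_gt0.
by rewrite ltnn eqxx mulr_gt0.
Qed.

Lemma schmidt_profile_ge0 : all (fun x => 0 <= x) s.
Proof.
apply/(all_nthP 0) => j _; case: (leqP j k) => [/schmidt_profile_gt0/ltW // |].
by move/schmidt_profile_eq0->.
Qed.

Lemma schmidt_profile_sorted : sorted (fun x y => y <= x) s.
Proof.
apply/(sortedP 0) => i _; case: (ltngtP i.+1 k) => [ik | /schmidt_profile_eq0-> | ik].
- by rewrite !schmidt_profile_nth ik ltnW.
- exact: nth_ge0 schmidt_profile_ge0.
- by rewrite !schmidt_profile_nth -ik ltnn eqxx ltnSn ler_piMl // ltW.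
Qed.

Let sum_schmidt_profile_lt : \sum_(j < k) s`_j = k%:R * c.
Proof.
under eq_bigr => j _ do rewrite schmidt_profile_nth ltn_ord.
by rewrite sumr_const card_ord mulr_natl.
Qed.

Lemma schmidt_profile_balanced : k%:R * s`_k = th * \sum_(j < k) s`_j.
Proof. by rewrite sum_schmidt_profile_lt schmidt_profile_nth ltnn eqxx mulrCA. Qed.

Lemma sqr_sum_schmidt_profile :
  (\sum_(j < N) s`_j) ^+ 2 = (k%:R + th) ^+ 2 / (k%:R + th ^+ 2).
Proof.
rewrite (sumr_ord_supp kN schmidt_profile_eq0) big_ord_recr /= sum_schmidt_profile_lt.
by rewrite schmidt_profile_nth ltnn eqxx -mulrDl exprMn c_sqr.
Qed.

Lemma sum_sqr_schmidt_profile : \sum_(j < N) s`_j ^+ 2 = 1.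
Proof.
have sqr_supp j : (k < j)%N -> s`_j ^+ 2 = 0 by move/schmidt_profile_eq0->; rewrite expr0n.
rewrite (sumr_ord_supp (g := fun j => s`_j ^+ 2) kN sqr_supp).
rewrite big_ord_recr /=; under eq_bigr => j _ do rewrite schmidt_profile_nth ltn_ord.
rewrite sumr_const card_ord schmidt_profile_nth ltnn eqxx exprMn -mulr_natl -mulrDl c_sqr.
by rewrite mulfV ?(gt_eqF norm_gt0).
Qed.

End SchmidtProfile.

Lemma admissible_schmidt_profile n m k th (U : 'M[algC]_n) :
  (1 <= k)%N -> (k < minn n m)%N -> 0 < th -> th <= 1 -> U *m adjmx U = 1%:M ->
  admissible (k%:R + th) (mxvec (U *m rdiag_mx n m (schmidt_profile (minn n m) k th))).
Proof.
move=> k_ge1 kd th_gt0 th_le1 uU.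
set s := schmidt_profile _ k th.
have svd : schmidt_coeffs (mxvec (U *m rdiag_mx n m s)) s.
  split; first exact: size_mkseq.
  - exact: schmidt_profile_ge0.
  - exact: schmidt_profile_sorted.
  - by exists U, 1%:M; rewrite mxvecK adjmx1; split; rewrite ?mulmx1.
apply/admissible_natDE => //; split.
  by rewrite /unit_vector (schmidt_norm2 svd) sum_sqr_schmidt_profile.
exists s; split=> // [j /(schmidt_profile_eq0 th kd) // | _].
by rewrite schmidt_profile_balanced.
Qed.

Lemma trace_pid_rdiag p q k (s : seq algC) : (forall j, (k < j)%N -> s`_j = 0) ->
  \tr ((pid_mx k.+1 : 'M_(q, p)) *m rdiag_mx p q s) = \sum_(j < minn p q) s`_j.
Proof.
move=> s_supp; rewrite -sum_rdiag /mxtrace exchange_big; apply: eq_bigr => i _.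
rewrite mxE; apply: eq_bigr => a _; rewrite !mxE eq_sym.
case: eqP => [ai | _]; last by rewrite mulr0.
by rewrite /= -ai; case: ltnP => [_ | /s_supp ->]; rewrite ?mulr1n ?mul1r ?mulr0.
Qed.

(* [1 / alpha_threshold k th] is the largest (sum_j s_j)^2 over (k+th)-admissible unit
   vectors, attained at [schmidt_profile _ k th]. *)
Definition alpha_threshold (k : nat) (th : algC) : algC :=
  (k%:R + th ^+ 2) / (k%:R + th) ^+ 2.

Lemma alpha_threshold_gt0 k th : 0 < th -> 0 < alpha_threshold k th.
Proof.
by move=> th_gt0; rewrite /alpha_threshold divr_gt0 ?exprn_gt0 ?ltr_wpDl ?ler0n ?exprn_gt0.
Qed.

Section WitnessMapPositivity.

Variables (n m k : nat) (th : algC).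
Hypotheses (k_ge1 : (1 <= k)%N) (k_lt_d : (k < minn n m)%N).
Hypotheses (th_gt0 : 0 < th) (th_lt1 : th < 1).

Let t := alpha_threshold k th.

Let t_gt0 : 0 < t := alpha_threshold_gt0 k th_gt0.

Lemma alpha_threshold_mul_succ_gt1 : 1 < t * k.+1%:R.
Proof.
have sum_gt0 : 0 < k%:R + th by rewrite ltr_wpDl ?ler0n.
rewrite /t /alpha_threshold mulrAC ltr_pdivlMr ?exprn_gt0 // mul1r -subr_gt0.
have -> : (k%:R + th ^+ 2) * k.+1%:R - (k%:R + th) ^+ 2 = k%:R * (1 - th) ^+ 2.
  by rewrite -natr1; ring.
by rewrite mulr_gt0 ?ltr0n // exprn_gt0 // subr_gt0.
Qed.

Lemma witness_map_in_Pbeta : Pbeta (k%:R + th) (witness_map n m k t).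
Proof.
split; first by apply: witness_map_herm; exact: gtr0_real t_gt0.
move=> psi /(admissible_natDE _ k_ge1 th_gt0 (ltW th_lt1)) [unit [s [svd s_supp adm]]].
have s_ge0 j : 0 <= s`_j by case: svd => _ s_ge0 _ _; exact: nth_ge0.
have sqr_supp j : (k < j)%N -> s`_j ^+ 2 = 0 by move/s_supp->; rewrite expr0n.
have norm1 := schmidt_norm2 svd.
rewrite unit (sumr_ord_supp (g := fun j => s`_j ^+ 2) k_lt_d sqr_supp) in norm1.
have tr_le := schmidt_trace_pid_le k.+1 svd.
rewrite (sumr_ord_supp k_lt_d s_supp) in tr_le.
have := admissible_sqr_sum_le k_ge1 th_gt0 (ltW th_lt1) s_ge0 (adm th_lt1).
rewrite -norm1 mulr1 => bound.
rewrite qform_choi_witness_map unit subr_ge0.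
apply: (@le_trans _ _ (t * (\sum_(j < k.+1) s`_j) ^+ 2)).
  apply: ler_wpM2l; first exact: ltW t_gt0.
  by rewrite ler_pXn2r // nnegrE // sumr_ge0.
by rewrite /t /alpha_threshold mulrAC ler_pdivrMr ?exprn_gt0 ?ltr_wpDl ?ler0n // mul1r.
Qed.

Lemma witness_map_notin_Pbeta_succ : ~ Pbeta k.+1%:R (witness_map n m k t).
Proof.
have uI : (1%:M : 'M[algC]_n) *m adjmx 1%:M = 1%:M by rewrite adjmx1 mulmx1.
have := admissible_schmidt_profile k_ge1 k_lt_d ltr01 (lexx 1) uI.
rewrite natr1 => adm [_ /(_ _ adm)]; case: adm => unit _.
have s_ge0 := schmidt_profile_ge0 k_lt_d (@ltr01 algC).
rewrite qform_choi_witness_map unit mxvecK mul1mx trace_pid_rdiag; last first.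
  exact: schmidt_profile_eq0.
rewrite ger0_norm ?sumr_ge0 // => [|j _]; last exact: nth_ge0.
rewrite sqr_sum_schmidt_profile // expr1n natr1 expr2 mulfK ?pnatr_eq0 //.
by rewrite subr_ge0 lt_geF ?alpha_threshold_mul_succ_gt1.
Qed.

End WitnessMapPositivity.

(** * Conjugation can break alpha-positivity *)

Lemma rdiag_mul_ratio p q (r s : seq algC) : (forall j, r`_j = 0 -> s`_j = 0) ->
  rdiag_mx p q r *m diag_mx (\row_(j < q) (s`_j / r`_j)) = rdiag_mx p q s.
Proof.
move=> rs; apply/matrixP => i j; rewrite mul_mx_diag !mxE.
case: eqP => [ij | _]; last by rewrite mul0r.
have [r0 | r_neq0] := eqVneq r`_i 0; first by rewrite r0 (rs _ r0) mul0r.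
by rewrite -ij mulrC divfK.
Qed.

Section AdTransfer.

Variables (n m k : nat) (th : algC).
Hypotheses (k_ge1 : (1 <= k)%N) (k_lt_d : (k < minn n m)%N).
Hypotheses (th_gt0 : 0 < th) (th_le1 : th <= 1).

Lemma Ad_transfer_admissible (Phi : 'M[algC]_n -> 'M[algC]_m) psi :
  admissible k.+1%:R psi ->
  exists A psi', admissible (k%:R + th) psi' /\
                 qform (choi (Ad A \o Phi)) psi' = qform (choi Phi) psi.
Proof.
rewrite -natr1 => /(admissible_natDE _ k_ge1 ltr01 (lexx 1)) [_ [s [svd s_supp _]]].
case: svd => _ _ _ [U [V [uU _ svd]]].
have {}svd : vec_mx psi = U *m rdiag_mx n m s *m adjmx V := svd.
set r := schmidt_profile (minn n m) k th.
(* U diag(r) E V^* = U diag(s) V^*, as r is positive wherever s is nonzero. *)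
pose E := diag_mx (\row_(j < m) (s`_j / r`_j)).
set A := map_mx conjC (E *m adjmx V).
exists A, (mxvec (U *m rdiag_mx n m r)); split; first exact: admissible_schmidt_profile.
have -> : choi (Ad A \o Phi) = tensor_mx (fun i j => Ad A (Phi (matunit i j))) by [].
rewrite qform_tensor_mx_Ad mxvecK map_conjCK mulmxA -(mulmxA U) rdiag_mul_ratio.
  by rewrite -svd vec_mxK.
move=> j r0; apply: s_supp; rewrite ltnNge; apply/negP.
by move=> /(schmidt_profile_gt0 k_lt_d th_gt0); rewrite -/r r0 ltxx.
Qed.

Lemma Ad_comp_notin_Pbeta (Phi : 'M[algC]_n -> 'M[algC]_m) :
  herm_preserving Phi -> ~ Pbeta k.+1%:R Phi ->
  exists A : 'M[algC]_m, ~ Pbeta (k%:R + th) (Ad A \o Phi).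
Proof.
move=> herm notP.
have [psi adm neg] : exists2 psi, admissible k.+1%:R psi & ~ 0 <= qform (choi Phi) psi.
  apply: NNPP => none; apply: notP; split=> // psi adm.
  by apply: NNPP => neg; apply: none; exists psi.
have [A [psi' [adm' eq_qform]]] := Ad_transfer_admissible Phi adm.
by exists A => -[_ pos]; apply: neg; rewrite -eq_qform; exact: pos.
Qed.

End AdTransfer.

Theorem proposition3p12 (n m k : nat) (theta : algC) :
  let d := minn n m in
  (1 <= k)%N -> (k <= d - 1)%N -> 0 < theta -> theta < 1 ->
  let alpha := k%:R + theta in
  (exists (Phi : {linear 'M[algC]_n -> 'M[algC]_m})
          (Gamma : {linear 'M[algC]_m -> 'M[algC]_m}),
      [/\ Pbeta alpha Phi, completely_positive Gamma &
          ~ Pbeta alpha (Gamma \o Phi)]) /\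
  (forall Phi : {linear 'M[algC]_n -> 'M[algC]_m},
      Pbeta alpha Phi -> ~ Pbeta (k.+1)%:R Phi ->
      exists A : 'M[algC]_m, ~ Pbeta alpha (Ad A \o Phi)).
Proof.
move=> d k_ge1 kd th_gt0 th_lt1 alpha.
have k_lt_d : (k < minn n m)%N by rewrite /d in kd; lia.
have th_le1 := ltW th_lt1.
split=> [|Phi [herm _]]; last exact: Ad_comp_notin_Pbeta.
have [A notP] := Ad_comp_notin_Pbeta k_ge1 k_lt_d th_gt0 th_le1
  (witness_map_herm _ _ (gtr0_real (alpha_threshold_gt0 k th_gt0)))
  (witness_map_notin_Pbeta_succ k_ge1 k_lt_d th_gt0 th_lt1).
exists (witness_map n m k (alpha_threshold k theta)), (Ad A); split=> //.
- exact: witness_map_in_Pbeta.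
- exact: Ad_completely_positive.
Qed.
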